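(* Let $\mathbb{T}=(T,\eta,\mu)$ be a $\mathcal{V}$-monad on $\mathcal{C}$, let $J,C\in\mathrm{ob}\,\mathcal{C}$, and let $t,u:C\rightrightarrows TJ$ be a parallel pair of morphisms in $\mathcal{C}$ (a parametrized $\mathbb{T}$-equation $t\doteq u$). The following are equivalent: (1) every $\mathbb{T}$-algebra satisfies $t\doteq u$; (2) the free $\mathbb{T}$-algebra $(TJ,\mu_J)$ satisfies $t\doteq u$; (3) $t=u$.
   Context: $\mathcal{V}$ is a locally small, complete and cocomplete symmetric monoidal closed category, and $\mathcal{C}$ is an arbitrary tensored and cotensored $\mathcal{V}$-category; $\mathcal{C}(-,-)$ denotes the hom-objects in $\mathcal{V}$. For a $\mathcal{V}$-monad $\mathbb{T}=(T,\eta,\mu)$ on $\mathcal{C}$, a $\mathbb{T}$-algebra $A=(A,a)$, objects $J,C$ of $\mathcal{C}$ and a morphism $t:C\to TJ$ in $\mathcal{C}$, the interpretation of $t$ in $A$ is the morphism $[\![t]\!]_A:=\mathcal{C}(t,a)\circ T_{J,A}:\mathcal{C}(J,A)\to\mathcal{C}(TJ,TA)\to\mathcal{C}(C,A)$ in $\mathcal{V}$, where $T_{J,A}$ is the structure morphism of the $\mathcal{V}$-functor $T$. The algebra $A$ satisfies $t\doteq u$ (for $t,u:C\rightrightarrows TJ$) if $[\![t]\!]_A=[\![u]\!]_A$. *)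

Record Cat : Type := {
  ob :> Type;
  hom : ob -> ob -> Type;
  idm : forall a, hom a a;
  comp : forall {a b c}, hom b c -> hom a b -> hom a c;
  comp_idl : forall a b (f : hom a b), comp (idm b) f = f;
  comp_idr : forall a b (f : hom a b), comp f (idm a) = f;
  comp_assoc : forall a b c d (f : hom c d) (g : hom b c) (h : hom a b),
      comp f (comp g h) = comp (comp f g) h
}.
Arguments hom {_} _ _.
Arguments idm {_} _.
Arguments comp {_ _ _ _} _ _.

Record SMC (V : Cat) : Type := {
  tens : V -> V -> V;
  tensm : forall {a b c d : V}, hom a b -> hom c d -> hom (tens a c) (tens b d);
  tensm_id : forall a c : V, tensm (idm a) (idm c) = idm (tens a c);
  tensm_comp : forall (a b b' c d d' : V) (f : hom b b') (g : hom a b)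
      (h : hom d d') (k : hom c d),
      tensm (comp f g) (comp h k) = comp (tensm f h) (tensm g k);
  unitI : V;
  assoc : forall a b c : V, hom (tens (tens a b) c) (tens a (tens b c));
  assoc_inv : forall a b c : V, hom (tens a (tens b c)) (tens (tens a b) c);
  assoc_iso1 : forall a b c, comp (assoc_inv a b c) (assoc a b c) = idm _;
  assoc_iso2 : forall a b c, comp (assoc a b c) (assoc_inv a b c) = idm _;
  assoc_nat : forall (a a' b b' c c' : V) (f : hom a a') (g : hom b b') (h : hom c c'),
      comp (assoc a' b' c') (tensm (tensm f g) h)
      = comp (tensm f (tensm g h)) (assoc a b c);
  lunit : forall a : V, hom (tens unitI a) a;
  lunit_inv : forall a : V, hom a (tens unitI a);
  lunit_iso1 : forall a, comp (lunit_inv a) (lunit a) = idm _;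
  lunit_iso2 : forall a, comp (lunit a) (lunit_inv a) = idm _;
  lunit_nat : forall (a b : V) (f : hom a b),
      comp (lunit b) (tensm (idm unitI) f) = comp f (lunit a);
  runit : forall a : V, hom (tens a unitI) a;
  runit_inv : forall a : V, hom a (tens a unitI);
  runit_iso1 : forall a, comp (runit_inv a) (runit a) = idm _;
  runit_iso2 : forall a, comp (runit a) (runit_inv a) = idm _;
  runit_nat : forall (a b : V) (f : hom a b),
      comp (runit b) (tensm f (idm unitI)) = comp f (runit a);
  pentagon : forall a b c d : V,
      comp (assoc a b (tens c d)) (assoc (tens a b) c d)
      = comp (tensm (idm a) (assoc b c d))
          (comp (assoc a (tens b c) d) (tensm (assoc a b c) (idm d)));
  triangle : forall a b : V,
      comp (tensm (idm a) (lunit b)) (assoc a unitI b) = tensm (runit a) (idm b);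
  sym : forall a b : V, hom (tens a b) (tens b a);
  sym_nat : forall (a a' b b' : V) (f : hom a a') (g : hom b b'),
      comp (sym a' b') (tensm f g) = comp (tensm g f) (sym a b);
  sym_invol : forall a b : V, comp (sym b a) (sym a b) = idm (tens a b);
  hexagon : forall a b c : V,
      comp (assoc b c a) (comp (sym a (tens b c)) (assoc a b c))
      = comp (tensm (idm b) (sym a c)) (comp (assoc b a c) (tensm (sym a b) (idm c)));
  ihom : V -> V -> V;
  ev : forall a b : V, hom (tens (ihom a b) a) b;
  curry : forall {c a b : V}, hom (tens c a) b -> hom c (ihom a b);
  ev_curry : forall (c a b : V) (f : hom (tens c a) b),
      comp (ev a b) (tensm (curry f) (idm a)) = f;
  curry_ev : forall (c a b : V) (g : hom c (ihom a b)),
      curry (comp (ev a b) (tensm g (idm a))) = g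
}.
Arguments tens {V} _ _ _.
Arguments tensm {V} _ {a b c d} _ _.
Arguments unitI {V} _.
Arguments assoc {V} _ _ _ _.
Arguments assoc_inv {V} _ _ _ _.
Arguments lunit {V} _ _.
Arguments lunit_inv {V} _ _.
Arguments runit {V} _ _.
Arguments runit_inv {V} _ _.
Arguments sym {V} _ _ _.
Arguments ihom {V} _ _ _.
Arguments ev {V} _ _ _.
Arguments curry {V} _ {c a b} _.

Definition is_iso {V : Cat} {a b : V} (f : hom a b) : Prop :=
  exists g : hom b a, comp g f = idm a /\ comp f g = idm b.

Record SCat : Type := {
  sob : Set;
  shom : sob -> sob -> Set;
  sid : forall a, shom a a;
  scomp : forall {a b c}, shom b c -> shom a b -> shom a c;
  scomp_idl : forall a b (f : shom a b), scomp (sid b) f = f;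
  scomp_idr : forall a b (f : shom a b), scomp f (sid a) = f;
  scomp_assoc : forall a b c d (f : shom c d) (g : shom b c) (h : shom a b),
      scomp f (scomp g h) = scomp (scomp f g) h
}.
Arguments shom {_} _ _.
Arguments sid {_} _.
Arguments scomp {_ _ _ _} _ _.

Record Functor (D : SCat) (V : Cat) : Type := {
  fob : sob D -> V;
  fmap : forall {d d' : sob D}, shom d d' -> hom (fob d) (fob d');
  fmap_id : forall d, fmap (sid d) = idm (fob d);
  fmap_comp : forall d d' d'' (f : shom d' d'') (g : shom d d'),
      fmap (scomp f g) = comp (fmap f) (fmap g)
}.
Arguments fob {D V} _ _.
Arguments fmap {D V} _ {d d'} _.

Definition complete (V : Cat) : Prop :=
  forall (D : SCat) (F : Functor D V),
  exists (L : V) (p : forall d, hom L (fob F d)),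
    (forall d d' (f : shom d d'), comp (fmap F f) (p d) = p d') /\
    (forall (X : V) (c : forall d, hom X (fob F d)),
       (forall d d' (f : shom d d'), comp (fmap F f) (c d) = c d') ->
       exists! h : hom X L, forall d, comp (p d) h = c d).

Definition cocomplete (V : Cat) : Prop :=
  forall (D : SCat) (F : Functor D V),
  exists (L : V) (i : forall d, hom (fob F d) L),
    (forall d d' (f : shom d d'), comp (i d') (fmap F f) = i d) /\
    (forall (X : V) (c : forall d, hom (fob F d) X),
       (forall d d' (f : shom d d'), comp (c d') (fmap F f) = c d) ->
       exists! h : hom L X, forall d, comp h (i d) = c d).

Section Enriched.
Variable V : Cat.
Variable M : SMC V.

Local Notation "a ⊗ b" := (tens M a b) (at level 40, left associativity).
Local Notation "f ⊗m g" := (tensm M f g) (at level 40, left associativity).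
Local Notation I := (unitI M).

Record VCat : Type := {
  vob :> Type;
  vhom : vob -> vob -> V;
  vcomp : forall a b c : vob, hom (vhom b c ⊗ vhom a b) (vhom a c);
  vid : forall a : vob, hom I (vhom a a);
  vcomp_assoc : forall a b c d : vob,
      comp (vcomp a b d) (vcomp b c d ⊗m idm (vhom a b))
      = comp (vcomp a c d) (comp (idm (vhom c d) ⊗m vcomp a b c)
                                 (assoc M (vhom c d) (vhom b c) (vhom a b)));
  vcomp_idl : forall a b : vob,
      comp (vcomp a b b) (vid b ⊗m idm (vhom a b)) = lunit M (vhom a b);
  vcomp_idr : forall a b : vob,
      comp (vcomp a a b) (idm (vhom a b) ⊗m vid a) = runit M (vhom a b)
}.

Section InC.
Variable C : VCat.

(* morphisms of the underlying ordinary category C_0 *)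
Definition umor (A B : C) : Type := hom I (vhom C A B).

Definition ucomp {A B D : C} (g : umor B D) (f : umor A B) : umor A D :=
  comp (vcomp C A B D) (comp (g ⊗m f) (lunit_inv M I)).

Definition postc {X X' : C} (Y : C) (g : umor X X') :
    hom (vhom C Y X) (vhom C Y X') :=
  comp (vcomp C Y X X') (comp (g ⊗m idm (vhom C Y X)) (lunit_inv M (vhom C Y X))).

Definition prec {Y X : C} (f : umor Y X) (Z : C) :
    hom (vhom C X Z) (vhom C Y Z) :=
  comp (vcomp C Y X Z) (comp (idm (vhom C X Z) ⊗m f) (runit_inv M (vhom C X Z))).

Definition homfg {Y X Z Z' : C} (f : umor Y X) (g : umor Z Z') :
    hom (vhom C X Z) (vhom C Y Z') :=
  comp (postc Y g) (prec f Z).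

(* tensors: X (.) A with unit m : X -> C(A, X(.)A) inducing
   C(X(.)A, B) ~ [X, C(A,B)] for all B *)
Definition tensored : Prop :=
  forall (X : V) (A : C), exists (XA : C) (m : hom X (vhom C A XA)),
    forall B : C,
      is_iso (curry M (comp (vcomp C A XA B) (idm (vhom C XA B) ⊗m m))
              : hom (vhom C XA B) (ihom M X (vhom C A B))).

(* cotensors: {X, B} with counit n : X -> C({X,B}, B) inducing
   C(A, {X,B}) ~ [X, C(A,B)] for all A *)
Definition cotensored : Prop :=
  forall (X : V) (B : C), exists (P : C) (n : hom X (vhom C P B)),
    forall A : C,
      is_iso (curry M (comp (vcomp C A P B)
                         (comp (n ⊗m idm (vhom C A P)) (sym M (vhom C A P) X)))
              : hom (vhom C A P) (ihom M X (vhom C A B))).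

Record VFunctor : Type := {
  Fob :> C -> C;
  Fhom : forall A B : C, hom (vhom C A B) (vhom C (Fob A) (Fob B));
  Fhom_comp : forall A B D : C,
      comp (Fhom A D) (vcomp C A B D)
      = comp (vcomp C (Fob A) (Fob B) (Fob D)) (Fhom B D ⊗m Fhom A B);
  Fhom_id : forall A : C, comp (Fhom A A) (vid C A) = vid C (Fob A)
}.

Definition VFid : VFunctor.
Proof.
  refine {| Fob := fun A => A; Fhom := fun A B => idm (vhom C A B) |}.
  - intros A B D. rewrite comp_idl. rewrite tensm_id. rewrite comp_idr. reflexivity.
  - intros A. apply comp_idl.
Defined.

Definition VFcomp (G F : VFunctor) : VFunctor.
Proof.
  refine {| Fob := fun A => G (F A);
            Fhom := fun A B => comp (Fhom G (F A) (F B)) (Fhom F A B) |}.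
  - intros A B D.
    rewrite <- comp_assoc, Fhom_comp, comp_assoc, Fhom_comp, <- comp_assoc.
    rewrite tensm_comp. reflexivity.
  - intros A. rewrite <- comp_assoc, Fhom_id, Fhom_id. reflexivity.
Defined.

Record VNat (F G : VFunctor) : Type := {
  ncomp :> forall A : C, umor (F A) (G A);
  nnat : forall A B : C,
      comp (postc (F A) (ncomp B)) (Fhom F A B)
      = comp (prec (ncomp A) (G B)) (Fhom G A B)
}.

Record VMonad : Type := {
  mT : VFunctor;
  meta : VNat VFid mT;
  mmu : VNat (VFcomp mT mT) mT;
  monad_unit_l : forall A : C,
      ucomp (mmu A) (comp (Fhom mT A (mT A)) (meta A)) = vid C (mT A);
  monad_unit_r : forall A : C, ucomp (mmu A) (meta (mT A)) = vid C (mT A);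
  monad_assoc : forall A : C,
      ucomp (mmu A) (comp (Fhom mT (mT (mT A)) (mT A)) (mmu A))
      = ucomp (mmu A) (mmu (mT A))
}.

Section Algebras.
Variable Tm : VMonad.
Local Notation T := (mT Tm).

Definition is_algebra (A : C) (a : umor (T A) A) : Prop :=
  ucomp a (meta Tm A) = vid C A /\
  ucomp a (comp (Fhom T (T A) A) a) = ucomp a (mmu Tm A).

Definition interp {J C0 : C} (t : umor C0 (T J)) (A : C) (a : umor (T A) A) :
    hom (vhom C J A) (vhom C C0 A) :=
  comp (homfg t a) (Fhom T J A).

Definition satisfies (A : C) (a : umor (T A) A) {J C0 : C}
    (t u : umor C0 (T J)) : Prop :=
  interp t A a = interp u A a.

End Algebras.
End InC.
End Enriched.

Arguments umor {V M C} _ _.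
Arguments VFunctor {V M} _.
Arguments VMonad {V M} _.
Arguments mT {V M C} _.
Arguments meta {V M C} _.
Arguments mmu {V M C} _.
Arguments is_algebra {V M C} _ _ _.
Arguments satisfies {V M C} _ _ _ {J C0} _ _.
Arguments tensored {V} _ _.
Arguments cotensored {V} _ _.

From Pilot Require Import Defs.

(* Evaluating the interpretation of t in the free algebra (TJ, mu_J) at the
   unit eta_J : I -> C(J, TJ) gives mu_J . T(eta_J) . t = t by the unit law of
   the monad.  Hence the free algebra, which is an algebra, satisfies t =. u
   only if t = u. *)

Section MonoidalFacts.
Context {V : Cat} {M : SMC V}.
Local Notation "f ⊗m g" := (tensm M f g) (at level 40, left associativity).
Local Notation I := (unitI M).

Lemma split_mono_cancel {a b c : V} (f : hom b c) (r : hom c b) (g h : hom a b) :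
  comp r f = idm b -> comp f g = comp f h -> g = h.
Proof.
  intros rf fg_fh.
  rewrite <- (comp_idl _ _ _ g), <- (comp_idl _ _ _ h), <- rf, <- !comp_assoc, fg_fh.
  reflexivity.
Qed.

Lemma split_epi_cancel {a b c : V} (f : hom a b) (s : hom b a) (g h : hom b c) :
  comp f s = idm b -> comp g f = comp h f -> g = h.
Proof.
  intros fs gf_hf.
  rewrite <- (comp_idr _ _ _ g), <- (comp_idr _ _ _ h), <- fs, !comp_assoc, gf_hf.
  reflexivity.
Qed.

Lemma tensm_split_l {a a' b b' : V} (f : hom a a') (g : hom b b') :
  f ⊗m g = comp (f ⊗m idm b') (idm a ⊗m g).
Proof. rewrite <- tensm_comp, comp_idl, comp_idr. reflexivity. Qed.

Lemma tensm_split_r {a a' b b' : V} (f : hom a a') (g : hom b b') :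
  f ⊗m g = comp (idm a' ⊗m g) (f ⊗m idm b).
Proof. rewrite <- tensm_comp, comp_idl, comp_idr. reflexivity. Qed.

Lemma tensm_id_comp {a b c d : V} (f : hom c d) (g : hom b c) :
  idm a ⊗m comp f g = comp (idm a ⊗m f) (idm a ⊗m g).
Proof. rewrite <- tensm_comp, comp_idl. reflexivity. Qed.

Lemma tensm_comp_id {a b c d : V} (f : hom c d) (g : hom b c) :
  comp f g ⊗m idm a = comp (f ⊗m idm a) (g ⊗m idm a).
Proof. rewrite <- tensm_comp, comp_idl. reflexivity. Qed.

Lemma lunit_inv_nat (a b : V) (f : hom a b) :
  comp (lunit_inv M b) f = comp (idm I ⊗m f) (lunit_inv M a).
Proof.
  apply (split_mono_cancel (lunit M b) (lunit_inv M b)); [apply lunit_iso1|].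
  rewrite !comp_assoc, lunit_iso2, comp_idl, lunit_nat, <- comp_assoc,
    lunit_iso2, comp_idr.
  reflexivity.
Qed.

Lemma runit_inv_nat (a b : V) (f : hom a b) :
  comp (runit_inv M b) f = comp (f ⊗m idm I) (runit_inv M a).
Proof.
  apply (split_mono_cancel (runit M b) (runit_inv M b)); [apply runit_iso1|].
  rewrite !comp_assoc, runit_iso2, comp_idl, runit_nat, <- comp_assoc,
    runit_iso2, comp_idr.
  reflexivity.
Qed.

Lemma tensm_unit_l_inj (a b : V) (f g : hom a b) : idm I ⊗m f = idm I ⊗m g -> f = g.
Proof.
  intros If_Ig. apply (split_epi_cancel (lunit M a) (lunit_inv M a)); [apply lunit_iso2|].
  rewrite <- !lunit_nat, If_Ig. reflexivity.
Qed.

Lemma tensm_unit_r_inj (a b : V) (f g : hom a b) : f ⊗m idm I = g ⊗m idm I -> f = g.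
Proof.
  intros fI_gI. apply (split_epi_cancel (runit M a) (runit_inv M a)); [apply runit_iso2|].
  rewrite <- !runit_nat, fI_gI. reflexivity.
Qed.

(* Kelly's coherence lemma: tensoring on the left with I, it follows from the
   pentagon on (I, I, x, y) and the triangle axiom. *)
Lemma lunit_tens_assoc (x y : V) :
  comp (lunit M (tens M x y)) (assoc M I x y) = lunit M x ⊗m idm y.
Proof.
  apply tensm_unit_l_inj.
  apply (split_epi_cancel (comp (assoc M I (tens M I x) y) (assoc M I I x ⊗m idm y))
           (comp (assoc_inv M I I x ⊗m idm y) (assoc_inv M I (tens M I x) y))).
  { rewrite <- comp_assoc, (comp_assoc _ _ _ _ _ (assoc M I I x ⊗m idm y)),
      <- tensm_comp_id, assoc_iso2, tensm_id, comp_idl.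
    apply assoc_iso2. }
  transitivity (comp (assoc M I x y) ((runit M I ⊗m idm x) ⊗m idm y)).
  - rewrite <- (comp_idl _ _ _ (idm I)), tensm_comp, <- comp_assoc,
      (comp_assoc _ _ _ _ _ (idm I ⊗m assoc M I x y)),
      <- (comp_assoc _ _ _ _ _ (idm I ⊗m assoc M I x y)), <- pentagon,
      comp_assoc, triangle, <- (tensm_id _ M x y), assoc_nat.
    reflexivity.
  - rewrite comp_assoc, <- assoc_nat, <- comp_assoc, <- tensm_comp, triangle, comp_idl.
    reflexivity.
Qed.

Lemma lunit_tens_unit : lunit M (tens M I I) = idm I ⊗m lunit M I.
Proof.
  symmetry. apply (split_mono_cancel (lunit M I) (lunit_inv M I)); [apply lunit_iso1|].
  apply lunit_nat.
Qed.

Lemma lunit_unit_eq_runit : lunit M I = runit M I.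
Proof.
  apply tensm_unit_r_inj.
  rewrite <- triangle, <- lunit_tens_assoc, lunit_tens_unit. reflexivity.
Qed.

Lemma lunit_inv_unit_eq_runit_inv : lunit_inv M I = runit_inv M I.
Proof.
  apply (split_mono_cancel (lunit M I) (lunit_inv M I)); [apply lunit_iso1|].
  rewrite lunit_iso2, lunit_unit_eq_runit, runit_iso2. reflexivity.
Qed.

Lemma assoc_lunit_inv_unit :
  comp (assoc M I I I) (comp (lunit_inv M I ⊗m idm I) (lunit_inv M I))
  = comp (idm I ⊗m lunit_inv M I) (lunit_inv M I).
Proof.
  rewrite comp_assoc. f_equal.
  apply (split_mono_cancel (idm I ⊗m lunit M I) (idm I ⊗m lunit_inv M I)).
  { rewrite <- tensm_id_comp, lunit_iso1, tensm_id. reflexivity. }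
  rewrite comp_assoc, triangle, <- !tensm_comp, !comp_idl, lunit_iso2,
    lunit_inv_unit_eq_runit_inv, runit_iso2.
  reflexivity.
Qed.

End MonoidalFacts.

Section UnderlyingCategory.
Context {V : Cat} {M : SMC V} {C : VCat V M}.
Local Notation "f ⊗m g" := (tensm M f g) (at level 40, left associativity).
Local Notation I := (unitI M).
Local Notation ucomp := (ucomp V M C).
Local Notation vid := (vid V M C).

Lemma ucomp_idl (A B : C) (f : umor A B) : ucomp (vid B) f = f.
Proof.
  unfold Defs.ucomp.
  rewrite tensm_split_l, !comp_assoc, vcomp_idl, lunit_nat, <- comp_assoc,
    lunit_iso2, comp_idr.
  reflexivity.
Qed.

Lemma ucomp_assoc (A B D E : C) (h : umor D E) (g : umor B D) (f : umor A B) :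
  ucomp h (ucomp g f) = ucomp (ucomp h g) f.
Proof.
  unfold Defs.ucomp.
  transitivity (comp (vcomp V M C A D E) (comp (idm _ ⊗m vcomp V M C A B D)
     (comp (h ⊗m (g ⊗m f)) (comp (idm I ⊗m lunit_inv M I) (lunit_inv M I))))).
  - rewrite (tensm_split_r h (comp _ _)), !tensm_id_comp, <- !comp_assoc.
    do 3 f_equal.
    rewrite !comp_assoc. f_equal.
    rewrite <- comp_assoc, <- tensm_split_r, (tensm_split_l h), comp_assoc, <- tensm_split_r.
    reflexivity.
  - rewrite (tensm_split_l (comp _ _) f), !tensm_comp_id, <- !comp_assoc,
      (comp_assoc _ _ _ _ _ (vcomp V M C A B E)), vcomp_assoc, <- !comp_assoc.
    do 2 f_equal.
    rewrite <- assoc_lunit_inv_unit, !comp_assoc. f_equal.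
    rewrite <- assoc_nat, <- !comp_assoc. f_equal.
    rewrite <- tensm_split_l, (tensm_split_r (lunit_inv M I) f), comp_assoc,
      <- tensm_split_l.
    reflexivity.
Qed.

Lemma comp_postc (Y X X' : C) (g : umor X X') (h : umor Y X) :
  comp (postc V M C Y g) h = ucomp g h.
Proof.
  unfold postc, Defs.ucomp.
  rewrite <- !comp_assoc, lunit_inv_nat, (comp_assoc _ _ _ _ _ (g ⊗m _)), <- tensm_split_l.
  reflexivity.
Qed.

(* [prec] is built with the right unitor and [ucomp] with the left one; they
   agree on I. *)
Lemma comp_prec (Y X Z : C) (f : umor Y X) (g : umor X Z) :
  comp (prec V M C f Z) g = ucomp g f.
Proof.
  unfold prec, Defs.ucomp.
  rewrite <- !comp_assoc, runit_inv_nat, (comp_assoc _ _ _ _ _ (_ ⊗m f)),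
    <- tensm_split_r, lunit_inv_unit_eq_runit_inv.
  reflexivity.
Qed.

Lemma comp_homfg (Y X Z Z' : C) (f : umor Y X) (g : umor Z Z') (h : umor X Z) :
  comp (homfg V M C f g) h = ucomp g (ucomp h f).
Proof.
  unfold homfg. rewrite <- comp_assoc, comp_prec, comp_postc. reflexivity.
Qed.

End UnderlyingCategory.

Section MonadAlgebras.
Context {V : Cat} {M : SMC V} {C : VCat V M}.
Variable Tm : VMonad C.
Local Notation T := (mT Tm).
Local Notation ucomp := (ucomp V M C).

Lemma is_algebra_free (J : C) : is_algebra Tm (T J) (mmu Tm J).
Proof. split; [apply monad_unit_r | apply monad_assoc]. Qed.

Lemma comp_interp {J C0 : C} (t : umor C0 (T J)) (A : C) (a : umor (T A) A)
    (h : umor J A) :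
  comp (interp V M C Tm t A a) h = ucomp a (ucomp (comp (Fhom V M C T J A) h) t).
Proof. unfold interp. rewrite <- comp_assoc, comp_homfg. reflexivity. Qed.

Lemma interp_free_unit {J C0 : C} (t : umor C0 (T J)) :
  comp (interp V M C Tm t (T J) (mmu Tm J)) (meta Tm J) = t.
Proof.
  rewrite comp_interp, ucomp_assoc, monad_unit_l. apply ucomp_idl.
Qed.

Lemma satisfies_free_eq {J C0 : C} (t u : umor C0 (T J)) :
  satisfies Tm (T J) (mmu Tm J) t u -> t = u.
Proof.
  intros free_tu.
  rewrite <- (interp_free_unit t), <- (interp_free_unit u), free_tu.
  reflexivity.
Qed.

End MonadAlgebras.

Theorem proposition3p7
  (V : Cat) (M : SMC V) (HVc : complete V) (HVcc : cocomplete V)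
  (C : VCat V M) (HCt : tensored M C) (HCct : cotensored M C)
  (Tm : VMonad C) (J C0 : C) (t u : umor C0 (mT Tm J)) :
  ((forall (A : C) (a : umor (mT Tm A) A),
       is_algebra Tm A a -> satisfies Tm A a t u)
     <-> satisfies Tm (mT Tm J) (mmu Tm J) t u)
  /\ (satisfies Tm (mT Tm J) (mmu Tm J) t u <-> t = u).
Proof.
  split; split.
  - intros all_tu. apply all_tu, is_algebra_free.
  - intros free_tu A a _. now rewrite (satisfies_free_eq Tm t u free_tu).
  - apply satisfies_free_eq.
  - intros ->. reflexivity.
Qed.
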